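(* Let $L$ be a finite lattice and let $\iota\colon L\to BC(L)$, $x\mapsto{\uparrow}x\cap\mathcal{M}(L)$. For every distributive lattice $\hat L$ for which there exists a join-semilattice embedding $\varphi\colon L\to\hat L$, there exists a join-semilattice embedding $\varepsilon\colon BC(L)\to\hat L$ such that $\varphi=\varepsilon\circ\iota$.
   Context: For a finite lattice $L$, $\mathcal{M}(L)$ denotes the set of meet-irreducible elements of $L$ (elements $x$ such that $x=\bigwedge X$ implies $x\in X$ for all $X\subseteq L$), ordered by the order of $L$; ${\uparrow}x=\{a\in L\mid a\ge x\}$. For an ordered set $P$, $\mathcal{F}(P)$ is the set of order filters (up-sets) of $P$. The (up-set) Birkhoff completion is $BC(L):=(\mathcal{F}(\mathcal{M}(L)),\supseteq)$, whose binary join is intersection. A join-semilattice embedding between lattices is an injective map preserving binary joins. *)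

From HB Require Import structures.
From mathcomp Require Import all_boot all_order.
Set Implicit Arguments. Unset Strict Implicit. Unset Printing Implicit Defensive.
Import Order.TTheory.
Local Open Scope order_scope.

Section BC.
Context {d : Order.disp_t} (L : finTBLatticeType d).

(* x is meet-irreducible: for every X ⊆ L, x = ⋀X implies x ∈ X
   (the empty meet is \top, so \top is not meet-irreducible). *)
Definition meet_irr (x : L) : bool :=
  [forall X : {set L}, (x == \meet_(y in X) y) ==> (x \in X)].

Definition Mirr : {set L} := [set x | meet_irr x].

Definition is_filterM (S : {set L}) : bool :=
  (S \subset Mirr) &&
  [forall x in S, forall y in Mirr, (x <= y) ==> (y \in S)].

(* carrier of BC(L) = (F(M(L)), ⊇); its binary join is intersection *)
Definition BC : {set {set L}} := [set S | is_filterM S].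

Definition iotaBC (x : L) : {set L} := [set m in Mirr | x <= m].

End BC.

From HB Require Import structures.
From mathcomp Require Import all_boot all_order.
Import Order.TTheory.
Set Implicit Arguments. Unset Strict Implicit.
Local Open Scope order_scope.

(* Put eps S := /\ { phi x | iota x \subset S }, a nonempty meet since iota \top
   is empty.  Distributivity of Lh turns eps A `|` eps B into the meet of the
   phi (x `|` y) with iota x \subset A and iota y \subset B, and iota (x `|` y)
   = iota x :&: iota y, so eps (A :&: B) = eps A `|` eps B.  As every element
   of L is a meet of meet-irreducibles, eps (iota x) = phi x.  For injectivity,
   let m be meet-irreducible in the filter A but not in B, and let m* > m be
   the meet of the strict upper bounds of m.  Then eps A <= phi m, and
   m* <= x `|` m whenever iota x \subset B, so phi m* <= eps B `|` phi m;
   hence eps B <= eps A would give m* <= m. *)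

Section BigMeet.
Context {disp : Order.disp_t} (T : meetSemilatticeType disp).
Variables (I : eqType) (r : seq I) (P : pred I) (F : I -> T) (idx : T).

Lemma bigmeet_inf i : i \in r -> P i ->
  \big[Order.meet/idx]_(j <- r | P j) F j <= F i.
Proof.
elim: r => // a s IHs; rewrite in_cons big_cons => /orP[/eqP<- ->|si Pi].
  exact: leIl.
by case: (P a); [apply: leIxr; apply: IHs | apply: IHs].
Qed.

Lemma bigmeet_ge u : u <= idx -> (forall i, P i -> u <= F i) ->
  u <= \big[Order.meet/idx]_(j <- r | P j) F j.
Proof. by move=> u_idx uF; elim/big_rec: _ => // i x Pi ux; rewrite lexI uF. Qed.

End BigMeet.

Lemma big_joinIl {disp : Order.disp_t} (T : distrLatticeType disp)
    (I : Type) (r : seq I) (P : pred I) (F : I -> T) (idx c : T) :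
  \big[Order.meet/idx]_(i <- r | P i) F i `|` c =
  \big[Order.meet/idx `|` c]_(i <- r | P i) (F i `|` c).
Proof. exact: (big_morph (fun x => x `|` c) (fun x y => joinIl x y c)). Qed.

Section MeetIrreducibles.
Context {d : Order.disp_t} (L : finTBLatticeType d).
Implicit Types (x y m : L) (A : {set L}).

Lemma mem_iotaBC x m : (m \in iotaBC x) = (m \in Mirr L) && (x <= m).
Proof. by rewrite inE. Qed.

Lemma top_notin_Mirr : (\top : L) \notin Mirr L.
Proof. by rewrite inE; apply/forallP => /(_ set0); rewrite big_set0 eqxx inE. Qed.

Lemma iotaBC_top : iotaBC (\top : L) = set0.
Proof.
apply/setP => m; rewrite mem_iotaBC in_set0 le1x.
by case: eqP => [->|]; rewrite ?(negbTE top_notin_Mirr) ?andbF.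
Qed.

Lemma iotaBC_join x y : iotaBC (x `|` y) = iotaBC x :&: iotaBC y.
Proof. by apply/setP => m; rewrite !inE leUx; case: (meet_irr m). Qed.

(* A witness z of "x <= z and not y <= z" with smallest up-set is
   meet-irreducible: if z = /\ X with z \notin X, every element of X is
   strictly above z, hence above y by minimality, and then so is z. *)
Lemma Mirr_separates x y : ~~ (y <= x) ->
  exists2 m, m \in Mirr L & (x <= m) && ~~ (y <= m).
Proof.
pose Q z := (x <= z) && ~~ (y <= z) => yx.
have Qx : Q x by rewrite /Q lexx.
have [m /andP[xm ym] m_min] := arg_minnP (fun z => #|[set w | z <= w]|) Qx.
exists m; last by rewrite xm.
rewrite inE; apply/forallP => X; apply/implyP => /eqP mE.
apply/negPn/negP => mX; case/negP: ym; rewrite mE; apply: meets_ge => z zX.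
have mz : m <= z by rewrite mE; apply: meets_inf.
apply/negPn/negP => yz.
have /m_min : Q z by rewrite /Q yz (le_trans xm mz).
apply/negP; rewrite -ltnNge; apply: proper_card; rewrite properE.
apply/andP; split; first by apply/subsetP => w; rewrite !inE; apply: le_trans.
apply/subsetPn; exists m; rewrite !inE ?lexx //.
by apply: contra mX => zm; rewrite (@le_anti _ _ m z) ?zm ?mz.
Qed.

Lemma iotaBC_subset x y : (iotaBC x \subset iotaBC y) = (y <= x).
Proof.
apply/idP/idP => [sub | yx]; last first.
  by apply/subsetP => m; rewrite !mem_iotaBC => /andP[-> /(le_trans yx)].
apply/negPn/negP => /Mirr_separates [m mM /andP[xm ym]].
have /(subsetP sub) : m \in iotaBC x by rewrite mem_iotaBC mM.
by rewrite mem_iotaBC (negbTE ym) andbF.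
Qed.

Lemma iotaBC_sub_BC A m : A \in BC L -> m \in A -> iotaBC m \subset A.
Proof.
rewrite inE => /andP[_ /forallP A_up] mA; apply/subsetP => z.
rewrite mem_iotaBC => /andP[zM mz].
by have := A_up m; rewrite mA => /forallP/(_ z); rewrite zM mz.
Qed.

Definition upper_meet m : L := \meet_(y in [set y | m < y]) y.

Lemma Mirr_lt_upper_meet m : m \in Mirr L -> m < upper_meet m.
Proof.
move=> mM; rewrite lt_def; apply/andP; split.
  apply: contraTneq mM => mE; rewrite inE; apply/forallP => /(_ [set y | m < y]).
  by rewrite -/(upper_meet m) mE eqxx inE ltxx.
by apply: meets_ge => z; rewrite inE => /ltW.
Qed.

Lemma upper_meet_le_join m y : ~~ (y <= m) -> upper_meet m <= y `|` m.
Proof.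
move=> ym; apply: meets_inf; rewrite inE lt_def leUr andbT.
by apply: contraNneq ym => <-; rewrite leUl.
Qed.

End MeetIrreducibles.

Section Extension.
Context {d : Order.disp_t} (L : finTBLatticeType d).
Context {d' : Order.disp_t} (Lh : distrLatticeType d') (phi : L -> Lh).
Hypotheses (phi_inj : injective phi) (phi_join : {morph phi : x y / x `|` y}).
Implicit Types (x y : L) (A B S : {set L}).

Lemma phi_le x y : (phi x <= phi y) = (x <= y).
Proof.
by rewrite !leEjoin -phi_join; apply/eqP/eqP => [/phi_inj | ->].
Qed.

Definition extBC S : Lh :=
  \big[Order.meet/phi \top]_(x | iotaBC x \subset S) phi x.

Lemma extBC_le S x : iotaBC x \subset S -> extBC S <= phi x.
Proof. by apply: bigmeet_inf; rewrite mem_index_enum. Qed.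

Lemma le_extBC S u : (forall x, iotaBC x \subset S -> u <= phi x) -> u <= extBC S.
Proof.
by move=> uphi; apply: bigmeet_ge => //; apply: uphi; rewrite iotaBC_top sub0set.
Qed.

Lemma le_extBC_join S u c :
  (forall x, iotaBC x \subset S -> u <= phi x `|` c) -> u <= extBC S `|` c.
Proof.
move=> uphi; rewrite big_joinIl; apply: bigmeet_ge => //.
by apply: uphi; rewrite iotaBC_top sub0set.
Qed.

Lemma extBCI A B : extBC (A :&: B) = extBC A `|` extBC B.
Proof.
apply/eqP; rewrite eq_le leUx; apply/andP; split; last first.
  by apply/andP; split; apply: le_extBC => x sx; apply: extBC_le;
    apply: subset_trans sx _; rewrite ?subsetIl ?subsetIr.
apply: le_extBC_join => x xA; rewrite joinC; apply: le_extBC_join => y yB.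
by rewrite -phi_join; apply: extBC_le; rewrite iotaBC_join setIC setISS.
Qed.

Lemma extBC_iota x : extBC (iotaBC x) = phi x.
Proof.
apply/eqP; rewrite eq_le extBC_le //=.
by apply: le_extBC => y; rewrite iotaBC_subset phi_le.
Qed.

Lemma extBC_le_subset A B : A \in BC L -> extBC B <= extBC A -> A \subset B.
Proof.
move=> A_BC BA; apply/subsetP => m mA; apply/negPn/negP => mB.
have mM : m \in Mirr L by move: A_BC; rewrite inE => /andP[/subsetP->].
have not_le_m x : iotaBC x \subset B -> ~~ (x <= m).
  by move=> sx; apply: contra mB => xm; apply: (subsetP sx); rewrite mem_iotaBC mM.
have Am : extBC A <= phi m by apply: extBC_le; apply: iotaBC_sub_BC.
have : phi (upper_meet m) <= extBC B `|` phi m.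
  apply: le_extBC_join => x /not_le_m xm.
  by rewrite -phi_join phi_le upper_meet_le_join.
rewrite (join_r (le_trans BA Am)) phi_le => um_m.
by move: (Mirr_lt_upper_meet mM); rewrite lt_leAnge um_m andbF.
Qed.

Lemma extBC_inj : {in BC L &, injective extBC}.
Proof.
move=> A B A_BC B_BC eAB; apply/eqP; rewrite eqEsubset.
by rewrite !extBC_le_subset // eAB.
Qed.

End Extension.

Theorem mainTheorem3 (d : Order.disp_t) (L : finTBLatticeType d)
  (d' : Order.disp_t) (Lh : distrLatticeType d') (phi : L -> Lh) :
  injective phi -> {morph phi : x y / x `|` y} ->
  exists eps : {set L} -> Lh,
    [/\ {in BC L &, injective eps},
        {in BC L &, forall A B, eps (A :&: B) = eps A `|` eps B}
      & forall x : L, phi x = eps (iotaBC x)].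
Proof.
move=> phi_inj phi_join; exists (extBC phi); split.
- exact: extBC_inj.
- by move=> A B _ _; apply: extBCI.
- by move=> x; rewrite extBC_iota.
Qed.
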